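(* Let $F$ be an infinite field and $n\ge3$. Let $z_1,\dots,z_k$ be distinct variables of degrees $g_1,\dots,g_k\in\{1,\dots,n-1\}$ with $g_1+\dots+g_k\le n-1$, and $y_1,\dots,y_t$ distinct variables of degree $0$. Then the pairwise distinct commutators $$[z_1,a^{(1)}_1y_1,\dots,a^{(1)}_ty_t,z_{\sigma(2)},a^{(2)}_1y_1,\dots,a^{(2)}_ty_t,\dots,z_{\sigma(k)},a^{(k)}_1y_1,\dots,a^{(k)}_ty_t],$$ with $\sigma\in S_k$, $\sigma(1)=1$ and $a^{(s)}_i\ge0$, are linearly independent modulo the $T_{\mathbb{Z}_n}$-ideal $I$ of graded identities of $UT_n(F)^{(-)}$.
   Context: $UT_n(F)^{(-)}$: $n\times n$ upper triangular matrices with bracket $[a,b]=ab-ba$ and canonical $\mathbb{Z}_n$-grading (degree-$k$ component spanned by $e_{ij}$, $j-i=k$); nonzero elements of $\mathbb{Z}_n$ are identified with $1,\dots,n-1$. $I$ is the set of polynomials in the free $\mathbb{Z}_n$-graded Lie algebra vanishing on $UT_n(F)^{(-)}$ under degree-respecting substitutions. Commutators are left normed; $ay$ inside a commutator means $y$ repeated $a$ times consecutively. *)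

From mathcomp Require Import all_boot all_order all_fingroup all_algebra.
Set Implicit Arguments. Unset Strict Implicit. Unset Printing Implicit Defensive.
Import GRing.Theory.
Local Open Scope ring_scope.

Definition lbr (R : pzRingType) (n : nat) (A B : 'M[R]_n) : 'M[R]_n :=
  A *m B - B *m A.

Definition lcomm (R : pzRingType) (n : nat) (s : seq 'M[R]_n) : 'M[R]_n :=
  match s with
  | [::] => 0
  | x :: r => foldl (@lbr R n) x r
  end.

(* A lies in the degree-g component of the canonical grading of UT_n:
   the span of the e_ij with j - i = g (g in 0..n-1). *)
Definition homog (R : pzRingType) (n g : nat) (A : 'M[R]_n) : bool :=
  [forall i : 'I_n, forall j : 'I_n, (nat_of_ord j != (nat_of_ord i + g)%N) ==> (A i j == 0)].

(* The sequence of arguments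
   z_{sigma 1}, a_1^(1) y_1, ..., a_t^(1) y_t, z_{sigma 2}, ..., a_t^(k) y_t
   with z_s := Z s, y_i := Y i and a_i^(s) := a (s, i). *)
Definition word (R : pzRingType) (n k t : nat) (sigma : 'S_k)
  (a : {ffun 'I_k * 'I_t -> nat}) (Z : 'I_k -> 'M[R]_n) (Y : 'I_t -> 'M[R]_n)
  : seq 'M[R]_n :=
  flatten [seq Z (sigma s) :: flatten [seq nseq (a (s, i)) (Y i) | i <- enum 'I_t]
          | s <- enum 'I_k].

From mathcomp Require Import all_boot all_order all_fingroup all_algebra.
Set Implicit Arguments. Unset Strict Implicit. Unset Printing Implicit Defensive.
Import GRing.Theory.
Local Open Scope ring_scope.

(* Fix the permutation s0 of one word, put p_0 = 0 and
   p_j = g_{s0(1)} + ... + g_{s0(j)}, and substitute the matrix unit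
   e_{p_{j-1}, p_j} for z_{s0(j)} and, for y_i, the diagonal matrix with entry
   v_{j,i} at position p_j.  The commutator of the word with permutation sigma
   and exponents a then vanishes unless sigma = s0, and equals
   (prod_{j,i} v_{j,i}^{a_i^(j)}) e_{0,p_k} otherwise.  Taking
   v_{j,i} = x^(N^r(j,i)), with N exceeding all exponents and r an enumeration
   of the pairs (j,i), the relation restricted to the words with permutation s0
   becomes a polynomial in x vanishing on the infinite field F whose exponents
   are pairwise distinct base-N expansions, so all its coefficients vanish. *)

Section InfiniteField.
Variable F : fieldType.
Hypothesis F_infinite : forall s : seq F, exists x : F, x \notin s.

Lemma exists_uniq_seq_size m : exists s : seq F, uniq s /\ size s = m.
Proof.
elim: m => [|m [s [us ss]]]; first by exists [::].
have [x xs] := F_infinite s.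
by exists (x :: s); rewrite /= xs us ss.
Qed.

Lemma poly_eq0_everywhere (q : {poly F}) : (forall x, q.[x] = 0) -> q = 0.
Proof.
move=> q0; have [s [us ss]] := exists_uniq_seq_size (size q).
by apply: (roots_geq_poly_eq0 _ us); [apply/allP => x _; apply/rootP | rewrite ss].
Qed.

Lemma monomial_sum_coef_eq0 (T : eqType) (L : seq T) (e : T -> nat) (c : T -> F) :
  uniq L -> {in L &, injective e} ->
  (forall x : F, \sum_(p <- L) c p * x ^+ e p = 0) ->
  forall p, p \in L -> c p = 0.
Proof.
move=> uL e_inj L0 p pL.
pose q := \sum_(p <- L) c p *: 'X^(e p).
have q0 : q = 0.
  apply: poly_eq0_everywhere => x; rewrite horner_sum -[RHS](L0 x).
  by apply: eq_bigr => i _; rewrite hornerZ hornerXn.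
have := congr1 (fun r : {poly F} => r`_(e p)) q0.
rewrite coef0 coef_sum (bigD1_seq p) //= coefZ coefXn eqxx mulr1.
rewrite big_seq_cond big1 ?addr0 // => i /andP[iL ip].
rewrite coefZ coefXn; case: eqP => [/esym/e_inj ei|]; last by rewrite mulr0.
by rewrite ei ?eqxx in ip.
Qed.

End InfiniteField.

Lemma base_digits_inj (N M : nat) (a b : 'I_M -> nat) :
  (forall j, a j < N)%N -> (forall j, b j < N)%N ->
  (\sum_(j < M) a j * N ^ j = \sum_(j < M) b j * N ^ j)%N -> a =1 b.
Proof.
elim: M a b => [|M IH] a b a_lt b_lt; first by move=> _ [].
have shift f : (\sum_(j < M.+1) f j * N ^ j =
                f ord0 + N * \sum_(j < M) f (lift ord0 j) * N ^ j)%N.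
  rewrite big_ord_recl expn0 muln1 big_distrr /=; congr (_ + _)%N.
  by apply: eq_bigr => j _; rewrite expnS mulnCA.
rewrite !shift => E.
have E0 : a ord0 = b ord0.
  have := congr1 (modn^~ N) E.
  by rewrite ![(_ + N * _)%N]addnC ![(N * _)%N]mulnC !modnMDl !modn_small.
have N_gt0 : (0 < N)%N by apply: leq_ltn_trans (a_lt ord0).
move: E; rewrite E0 => /addnI/eqP; rewrite eqn_mul2l eqn0Ngt N_gt0 /= => /eqP E j.
case: (unliftP ord0 j) => [j'|] -> //.
exact: (IH (fun i => a (lift ord0 i)) (fun i => b (lift ord0 i))).
Qed.

Definition base_expansion (T : finType) (N : nat) (a : T -> nat) : nat :=
  \sum_(j : T) a j * N ^ enum_rank j.

Lemma base_expansion_inj (T : finType) (N : nat) (a b : T -> nat) :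
  (forall j, a j < N)%N -> (forall j, b j < N)%N ->
  base_expansion N a = base_expansion N b -> a =1 b.
Proof.
move=> a_lt b_lt E j.
have by_rank f : base_expansion N f = (\sum_(m < #|T|) f (enum_val m) * N ^ m)%N.
  rewrite /base_expansion (reindex (fun m : 'I_#|T| => enum_val m)) /=; last first.
    by exists enum_rank => x _; rewrite ?enum_valK ?enum_rankK.
  by apply: eq_bigr => i _; rewrite enum_valK.
rewrite !by_rank in E.
by rewrite -(enum_rankK j) (base_digits_inj (fun m => a_lt (enum_val m))
  (fun m => b_lt (enum_val m)) E).
Qed.

Section FirstRowCommutators.
Variables (F : fieldType) (n : nat).
Local Notation M := 'M[F]_n.+1.

Lemma lbr0x (X : M) : lbr 0 X = 0.
Proof. by rewrite /lbr mul0mx mulmx0 subrr. Qed.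

Lemma foldl_lbr0 (w : seq M) : foldl (@lbr F n.+1) 0 w = 0.
Proof. by elim: w => //= x w; rewrite lbr0x. Qed.

Lemma lbr_row0_delta (l : F) (q a b : 'I_n.+1) : b != ord0 ->
  lbr (l *: delta_mx ord0 q) (delta_mx a b : M) =
  if q == a then l *: delta_mx ord0 b else 0.
Proof.
move=> b0; rewrite /lbr -scalemxAl -scalemxAr !mul_delta_mx_cond.
rewrite (negbTE b0) mulr0n scaler0 subr0.
by case: (q == a); rewrite ?mulr1n ?mulr0n ?scaler0.
Qed.

Lemma lbr_row0_diag (l : F) (q : 'I_n.+1) (d : 'rV[F]_n.+1) :
  lbr (l *: delta_mx ord0 q : M) (diag_mx d) =
  (l * (d 0 q - d 0 ord0)) *: delta_mx ord0 q.
Proof.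
rewrite /lbr mul_mx_diag mul_diag_mx; apply/matrixP => i j; rewrite !mxE.
case: (eqVneq i ord0) => [->|_]; case: (eqVneq j q) => [->|_] /=;
  rewrite ?mulr1 ?mulr0 ?mul0r ?subrr //.
by rewrite mulrBr [d 0 ord0 * l]mulrC.
Qed.

Lemma foldl_lbr_row0_diags (I : eqType) (r : seq I) (D : I -> 'rV[F]_n.+1)
    (e : I -> nat) (l : F) (q : 'I_n.+1) :
  foldl (@lbr F n.+1) (l *: delta_mx ord0 q)
        (flatten [seq nseq (e i) (diag_mx (D i)) | i <- r]) =
  (l * \prod_(i <- r) (D i 0 q - D i 0 ord0) ^+ e i) *: delta_mx ord0 q.
Proof.
elim: r l => [|i r IH] l /=; first by rewrite big_nil mulr1.
rewrite foldl_cat big_cons.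
have -> : foldl (@lbr F n.+1) (l *: delta_mx ord0 q) (nseq (e i) (diag_mx (D i))) =
          (l * (D i 0 q - D i 0 ord0) ^+ e i) *: delta_mx ord0 q.
  elim: (e i) l => [|m IHm] l /=; first by rewrite expr0 mulr1.
  by rewrite lbr_row0_diag IHm exprS mulrA [_ * (_ - _)]mulrC -!mulrA.
by rewrite IH mulrA.
Qed.

Lemma lbr_delta00_row0 (b : 'I_n.+1) : b != ord0 ->
  lbr (delta_mx ord0 ord0) (delta_mx ord0 b : M) = delta_mx ord0 b.
Proof.
by move=> b0; have := lbr_row0_delta 1 ord0 ord0 b0; rewrite eqxx !scale1r.
Qed.

End FirstRowCommutators.

Lemma all_iota_perm_eq k (sg s0 : 'S_k.+1) :
  all (fun j => sg (inord j) == s0 (inord j)) (iota 0 k.+1) = (sg == s0).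
Proof.
apply/allP/eqP => [sg_s0|-> //]; apply/permP => i.
by apply/eqP; have := sg_s0 i; rewrite mem_iota ltn_ord inord_val; apply.
Qed.

Section Staircase.
Variables (F : fieldType) (n k t : nat) (g : 'I_k.+1 -> nat) (s0 : 'S_k.+1).
Hypothesis g_gt0 : forall s, (0 < g s)%N.
Hypothesis sum_g_le : (\sum_(s < k.+1) g s <= n)%N.
Hypothesis s0_fix0 : s0 ord0 = ord0.

Definition stair (j : nat) : nat := \sum_(0 <= i < j) g (s0 (inord i)).

Lemma stair0 : stair 0 = 0%N.
Proof. by rewrite /stair big_geq. Qed.

Lemma stairS j : stair j.+1 = (stair j + g (s0 (inord j)))%N.
Proof. by rewrite /stair big_nat_recr. Qed.

Lemma stair_lt : {homo stair : i j / (i < j)%N}.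
Proof.
move=> i; elim=> // j IH; rewrite ltnS leq_eqVlt stairS => /predU1P[->|/IH lt_ij].
  by rewrite -{1}[stair j]addn0 ltn_add2l.
by rewrite ltn_addr.
Qed.

Lemma stair_inj : injective stair.
Proof. by move=> i j E; case: (ltngtP i j) => // /stair_lt; rewrite E ltnn. Qed.

Lemma stair_max : stair k.+1 = (\sum_(s < k.+1) g s)%N.
Proof.
rewrite [RHS](reindex_perm s0) /stair big_mkord.
by apply: eq_bigr => i _; rewrite inord_val.
Qed.

Lemma stair_le j : (j <= k.+1)%N -> (stair j <= n)%N.
Proof.
rewrite leq_eqVlt => /predU1P[->|/stair_lt/ltnW le_j]; first by rewrite stair_max.
by apply: leq_trans le_j _; rewrite stair_max.
Qed.

Definition corner (j : nat) : 'I_n.+1 := inord (stair j).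

Lemma val_corner j : (j <= k.+1)%N -> corner j = stair j :> nat.
Proof. by move=> le_jk; rewrite /corner inordK // ltnS stair_le. Qed.

Lemma corner0 : corner 0 = ord0.
Proof. by apply/val_inj; rewrite /= val_corner ?stair0. Qed.

Lemma eq_corner i j : (i <= k.+1)%N -> (j <= k.+1)%N ->
  (corner i == corner j) = (i == j).
Proof.
move=> le_ik le_jk; apply/eqP/eqP => [E|-> //].
by apply: stair_inj; rewrite -val_corner // E val_corner.
Qed.

Lemma cornerS_neq0 j : (j < k.+1)%N -> corner j.+1 != ord0.
Proof. by move=> lt_jk; rewrite -corner0 eq_corner. Qed.

Definition rk (s : 'I_k.+1) : nat := val ((s0^-1)%g s).

Lemma rk_lt s : (rk s < k.+1)%N.
Proof. exact: ltn_ord. Qed.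

Lemma eq_rk s j : (j < k.+1)%N -> (j == rk s) = (s == s0 (inord j)).
Proof.
move=> lt_jk; rewrite /rk; apply/eqP/eqP => [->|->]; first by rewrite inord_val permKV.
by rewrite permK /= inordK.
Qed.

Definition Zstair (s : 'I_k.+1) : 'M[F]_n.+1 :=
  delta_mx (corner (rk s)) (corner (rk s).+1).

Lemma homog_Zstair s : homog (g s) (Zstair s).
Proof.
apply/forallP => i; apply/forallP => j; apply/implyP; rewrite mxE.
case: (eqVneq i (corner (rk s))) => [->|] //; case: (eqVneq j _) => [->|] // /eqP[].
rewrite !val_corner ?rk_lt ?(ltnW (rk_lt s)) // stairS.
by rewrite /rk inord_val permKV.
Qed.

Variable v : 'I_k.+1 -> 'I_t -> F.

Definition Ddiag (i : 'I_t) : 'rV[F]_n.+1 :=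
  \row_p \sum_(m < k.+1) (p == corner m.+1)%:R * v m i.

Definition Ystair (i : 'I_t) : 'M[F]_n.+1 := diag_mx (Ddiag i).

Lemma homog_Ystair i : homog 0 (Ystair i).
Proof.
apply/forallP => p; apply/forallP => q; apply/implyP; rewrite addn0 mxE.
by case: (eqVneq p q) => [->|]; rewrite ?eqxx ?mulr0n.
Qed.

Lemma Ddiag_corner j i : (j < k.+1)%N -> Ddiag i 0 (corner j.+1) = v (inord j) i.
Proof.
move=> lt_jk; rewrite mxE (bigD1 (inord j)) //= inordK // eqxx mul1r.
rewrite big1 ?addr0 // => m ne_mj; rewrite eq_corner ?ltn_ord // eqSS.
suff /negbTE -> : j != m by rewrite mul0r.
by apply: contraNneq ne_mj => ->; rewrite inord_val.
Qed.

Lemma Ddiag0 i : Ddiag i 0 ord0 = 0.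
Proof.
by rewrite mxE big1 // => m _; rewrite -corner0 eq_corner ?mul0r ?(ltn_ord m).
Qed.

Lemma foldl_lbr_stair_blocks (sg : 'S_k.+1) (a : {ffun 'I_k.+1 * 'I_t -> nat}) m :
  (m <= k.+1)%N ->
  foldl (@lbr F n.+1) (delta_mx ord0 ord0)
    (flatten [seq Zstair (sg (inord j)) ::
                  flatten [seq nseq (a (inord j, i)) (Ystair i) | i <- enum 'I_t]
             | j <- iota 0 m]) =
  if all (fun j => sg (inord j) == s0 (inord j)) (iota 0 m) then
    (\prod_(j <- iota 0 m) \prod_(i <- enum 'I_t) v (inord j) i ^+ a (inord j, i))
      *: delta_mx ord0 (corner m)
  else 0.
Proof.
elim: m => [_|m IH lt_mk]; first by rewrite big_nil scale1r corner0.
rewrite -[m.+1]addn1 iotaD map_cat flatten_cat foldl_cat IH ?(ltnW lt_mk) //.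
rewrite all_cat big_cat big_seq1 add0n addn1 /= andbT cats0.
case: all; last by rewrite lbr0x foldl_lbr0.
rewrite lbr_row0_delta ?cornerS_neq0 ?rk_lt //.
rewrite eq_corner ?(ltnW (rk_lt _)) ?(ltnW lt_mk) // eq_rk //.
case: eqP => [sg_m|_]; last by rewrite foldl_lbr0.
rewrite (foldl_lbr_row0_diags _ Ddiag (fun i => a (inord m, i))).
have -> : rk (sg (inord m)) = m by apply/esym/eqP; rewrite eq_rk // sg_m.
congr (_ *: _); congr (_ * _); apply: eq_bigr => i _.
by rewrite Ddiag_corner // Ddiag0 subr0.
Qed.

Lemma lcomm_word_stair (sg : 'S_k.+1) (a : {ffun 'I_k.+1 * 'I_t -> nat}) :
  sg ord0 = ord0 ->
  lcomm (word sg a Zstair Ystair) =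
  if sg == s0 then
    (\prod_(j < k.+1) \prod_(i < t) v j i ^+ a (j, i)) *: delta_mx ord0 (corner k.+1)
  else 0.
Proof.
move=> sg0.
have word_iota : word sg a Zstair Ystair =
    flatten [seq Zstair (sg (inord j)) ::
                 flatten [seq nseq (a (inord j, i)) (Ystair i) | i <- enum 'I_t]
            | j <- iota 0 k.+1].
  rewrite /word -val_enum_ord -map_comp; congr flatten.
  by apply: eq_map => j /=; rewrite inord_val.
have Zstair_head : Zstair (sg (inord 0)) = delta_mx ord0 (corner 1).
  have rk0 : rk ord0 = 0%N by rewrite /rk -{1}s0_fix0 permK.
  have -> : inord 0 = ord0 :> 'I_k.+1 by apply: val_inj; rewrite /= inordK.
  by rewrite sg0 /Zstair rk0 corner0.
have -> : lcomm (word sg a Zstair Ystair) =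
          foldl (@lbr F n.+1) (delta_mx ord0 ord0) (word sg a Zstair Ystair).
  by rewrite word_iota /= Zstair_head lbr_delta00_row0 // cornerS_neq0.
rewrite word_iota foldl_lbr_stair_blocks // all_iota_perm_eq.
case: eqP => // _; congr (_ *: _).
rewrite -val_enum_ord big_map big_enum /=; apply: eq_bigr => j _.
by rewrite inord_val big_enum.
Qed.

End Staircase.

Section Independence.
Variables (F : fieldType) (n k t : nat) (g : 'I_k.+1 -> nat).
Hypothesis g_gt0 : forall s, (0 < g s)%N.
Hypothesis sum_g_le : (\sum_(s < k.+1) g s <= n)%N.
Variables (S : seq ('S_k.+1 * {ffun 'I_k.+1 * 'I_t -> nat}))
          (c : 'S_k.+1 * {ffun 'I_k.+1 * 'I_t -> nat} -> F).
Hypothesis S_fix0 : forall p, p \in S -> p.1 ord0 = ord0.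
Hypothesis S_identity : forall (Z : 'I_k.+1 -> 'M[F]_n.+1) (Y : 'I_t -> 'M[F]_n.+1),
  (forall s, homog (g s) (Z s)) -> (forall i, homog 0 (Y i)) ->
  \sum_(p <- S) c p *: lcomm (word p.1 p.2 Z Y) = 0.

Lemma sum_stair_monomials_eq0 (s0 : 'S_k.+1) (N : nat) (x : F) :
  s0 ord0 = ord0 ->
  \sum_(p <- S | p.1 == s0) c p * x ^+ base_expansion N p.2 = 0.
Proof.
move=> s0_fix0; pose v (m : 'I_k.+1) (i : 'I_t) := x ^+ (N ^ enum_rank (m, i)).
have := S_identity (homog_Zstair F s0 g_gt0 sum_g_le) (homog_Ystair n g s0 v).
move/(congr1 (fun A : 'M[F]_n.+1 => A ord0 (corner n g s0 k.+1))).
rewrite summxE mxE => entry0.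
rewrite -[RHS]entry0 big_mkcond; apply: eq_big_seq => p pS.
rewrite mxE lcomm_word_stair ?S_fix0 //.
case: eqP => _; last by rewrite mxE mulr0.
rewrite !mxE !eqxx mulr1; congr (_ * _).
rewrite /base_expansion pair_big /= -prodrXr.
by apply: eq_bigr => -[m i] _; rewrite -exprM mulnC.
Qed.

End Independence.

Theorem mainTheorem16 (F : fieldType)
  (F_infinite : forall s : seq F, exists x : F, x \notin s)
  (n k t : nat) (g : 'I_k -> nat) :
  (3 <= n)%N -> (0 < k)%N ->
  (forall s : 'I_k, (0 < g s < n)%N) ->
  (\sum_(s < k) g s <= n.-1)%N ->
  forall (S : seq ('S_k * {ffun 'I_k * 'I_t -> nat}))
         (c : 'S_k * {ffun 'I_k * 'I_t -> nat} -> F),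
  uniq S ->
  (forall p, p \in S -> forall i : 'I_k, val i = 0%N -> val (p.1 i) = 0%N) ->
  (forall (Z : 'I_k -> 'M[F]_n) (Y : 'I_t -> 'M[F]_n),
      (forall s, homog (g s) (Z s)) -> (forall i, homog 0 (Y i)) ->
      \sum_(p <- S) c p *: lcomm (word p.1 p.2 Z Y) = 0) ->
  forall p, p \in S -> c p = 0.
Proof.
case: n => [|n] //; case: k g => [|k] g //.
move=> _ _ g_bounds sum_g S c uS S_fix0 S_identity p pS.
have g_gt0 s : (0 < g s)%N by case/andP: (g_bounds s).
have S_fix0' q : q \in S -> q.1 ord0 = ord0 by move=> qS; apply/val_inj/S_fix0.
pose N := (\max_(q <- S) \max_j q.2 j).+1.
have digits_lt q : q \in S -> forall j, (q.2 j < N)%N.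
  move=> qS j; rewrite ltnS (leq_trans (leq_bigmax j)) //.
  exact: (leq_bigmax_seq (F := fun q : _ * {ffun _} => \max_j q.2 j) q qS).
apply: (monomial_sum_coef_eq0 F_infinite (filter_uniq (fun q => q.1 == p.1) uS)
          (e := fun q => base_expansion N (q : _ * {ffun _}).2)); last first.
  by rewrite mem_filter eqxx.
- move=> x; rewrite big_filter.
  exact: (sum_stair_monomials_eq0 g_gt0 sum_g S_fix0' S_identity _ _ (S_fix0' p pS)).
- move=> [sg1 a1] [sg2 a2]; rewrite !mem_filter /=.
  move=> /andP[/eqP -> q1S] /andP[/eqP -> q2S] E.
  congr (_, _); apply/ffunP.
  exact: base_expansion_inj (digits_lt _ q1S) (digits_lt _ q2S) E.
Qed.
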